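(* Consider a Bayesian network with source $X$ as in the context, and let $W$ be a node and $V$ a set of nodes with $W\notin V$, $W\ne X$ and $W>v$ for all $v\in V$. Then $$\eta_{\mathrm{TV}}(P_{V\cup\{W\}|X})\le(1-\eta_W)\,\eta_{\mathrm{TV}}(P_{V|X})+\eta_W\,\eta_{\mathrm{TV}}(P_{V\cup\mathrm{pa}(W)|X}),$$ where $\eta_W=\eta_{\mathrm{TV}}(P_{Y_W|Y_{\mathrm{pa}(W)}})$. Moreover, for every set of nodes $V$, $\eta_{\mathrm{TV}}(P_{V|X})\le\mathrm{perc}(V)$, where percolation uses removal probabilities $1-\eta_{\mathrm{TV}}(P_{Y_v|Y_{\mathrm{pa}(v)}})$. In particular, if all these node coefficients are $<1$ then $\eta_{\mathrm{TV}}(P_{V|X})<1$ for every $V$ not containing $X$.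
   Context: Bayesian network: finite directed acyclic graph whose vertices are random variables $Y_v$ on finite alphabets, each non-source vertex $v$ with a kernel $P_{Y_v|Y_{\mathrm{pa}(v)}}$ from its parents $\mathrm{pa}(v)$; a distinguished parentless source $X$; vertices topologically sorted ($v_1>v_2$ implies no directed path from $v_1$ to $v_2$). $P_{V|X}$ is the induced kernel from $X$ to $(Y_v)_{v\in V}$. Total variation $d_{\mathrm{TV}}(P,Q)=\sup_E|P(E)-Q(E)|$. Dobrushin coefficient: $\eta_{\mathrm{TV}}(K)=\sup_{x,x'}d_{\mathrm{TV}}(K(\cdot|x),K(\cdot|x'))$ (equivalently the supremum of $d_{\mathrm{TV}}(K\circ P,K\circ Q)/d_{\mathrm{TV}}(P,Q)$). Site percolation: each node $v\ne X$ independently removed with probability $1-\eta_v$ ($X$ never removed; parentless nodes other than $X$ are removed); $\mathrm{perc}(V)$ is the probability of a directed path of non-removed nodes from $X$ to some node in $V$. *)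

(* everything is finite, so suprema are finite maxima and
   percolation probabilities are finite sums over retained-node sets. *)
From HB Require Import structures.
From mathcomp Require Import all_boot all_order all_algebra.
Set Implicit Arguments. Unset Strict Implicit. Unset Printing Implicit Defensive.
Import Order.TTheory GRing.Theory Num.Theory.
Local Open Scope ring_scope.

Section BN.
Variable R : realFieldType.

Definition tv (T : finType) (P Q : T -> R) : R :=
  \big[Num.max/0]_(E : {set T}) `|\sum_(t in E) P t - \sum_(t in E) Q t|.

Definition dobrushin (S T : finType) (K : S -> T -> R) : R :=
  \big[Num.max/0]_(s : S) \big[Num.max/0]_(s' : S) tv (K s) (K s').

Variable n : nat.
Variable A : 'I_n -> finType.

Definition conf := {dffun forall v : 'I_n, A v}.
(* configurations restricted to a subset V of nodes (None outside V) *)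
Definition mconf := {dffun forall v : 'I_n, option (A v)}.

Definition proj (V : {set 'I_n}) (y : conf) : mconf :=
  @finfun _ (fun v => option (A v)) (fun v => if v \in V then Some (y v) else None).

Variable pa : 'I_n -> {set 'I_n}.
Variable X : 'I_n.
(* kernel of node v; K v y is the law of Y_v given the configuration y, and is
   required (in the theorem) to depend only on the parent coordinates of y *)
Variable K : forall v : 'I_n, conf -> A v -> R.

Definition joint (x : A X) (y : conf) : R :=
  (y X == x)%:R * \prod_(v : 'I_n | v != X) K y (y v).

Definition marg (V : {set 'I_n}) (x : A X) (z : mconf) : R :=
  \sum_(y : conf | proj V y == z) joint x y.

Definition eta_induced (V : {set 'I_n}) : R :=
  dobrushin (fun x : A X => marg V x).

Definition eta_node (v : 'I_n) : R := dobrushin (K (v := v)).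

Definition keep_prob (v : 'I_n) : R :=
  if pa v == set0 then 0 else eta_node v.

Definition ret_edge (s : {set 'I_n}) : rel 'I_n :=
  fun u w => [&& u \in s, w \in s & u \in pa w].

Definition perc (V : {set 'I_n}) : R :=
  \sum_(s : {set 'I_n} | (X \in s) && [exists v in V, connect (ret_edge s) X v])
     \prod_(v : 'I_n | v != X) (if v \in s then keep_prob v else 1 - keep_prob v).

End BN.

From HB Require Import structures.
From mathcomp Require Import all_boot all_order all_algebra.
From mathcomp Require Import lra ring.
Import Order.TTheory GRing.Theory Num.Theory.
Local Open Scope ring_scope.
Set Implicit Arguments. Unset Strict Implicit. Unset Printing Implicit Defensive.

(* For W later than every node of V, and hence than pa(W), the law of (Y_V, Y_W)
   arises from that of Y_{V ∪ pa W} by drawing Y_W from the kernel of W.  So, for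
   two values x, x' of the source, the difference of the laws of Y_{V ∪ {W}} is a
   coarsening of the image, fibre by fibre over Y_V, of the signed measure
   ν = P_{V ∪ pa W | x} - P_{V ∪ pa W | x'} under that kernel.  A kernel with
   Dobrushin coefficient η maps ν to a signed measure of ℓ¹-norm at most
   (1 - η) |ν(1)| + η ‖ν‖₁: couple the positive and the negative part of ν, and
   only the coupled mass is contracted.  On each fibre |ν(1)| is the mass of the
   marginal difference on V, which gives the first inequality.
   Conditioning on whether W is retained, perc satisfies the same recursion with
   ≥, and both sides vanish on the empty set, so induction on the largest node of
   V gives η_TV(P_{V|X}) ≤ perc(V).  Finally perc(V) < 1 when X ∉ V, since the
   configuration in which X alone is retained has positive probability. *)

Section SignedMeasures.
Variable R : realFieldType.

Definition l1 (T : finType) (mu : T -> R) : R := \sum_t `|mu t|.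

Definition push (Y Z : finType) (f : Y -> Z) (mu : Y -> R) (z : Z) : R :=
  \sum_(y | f y == z) mu y.

Lemma sum_natr_eqM (T : finType) (a : T) (F : T -> R) :
  \sum_z (a == z)%:R * F z = F a.
Proof.
rewrite (bigD1 a) //= eqxx mul1r big1 ?addr0 // => z za.
by rewrite eq_sym (negbTE za) mul0r.
Qed.

Lemma sum_set_split (T : finType) (W : T) (F : {set T} -> R) :
  \sum_s F s = \sum_(s : {set T} | W \notin s) (F s + F (W |: s)).
Proof.
rewrite (bigID (fun s : {set T} => W \notin s)) big_split /=; congr (_ + _).
rewrite (reindex_onto (fun s => W |: s) (fun s => s :\ W)) /=.
  apply: eq_bigl => s; rewrite setU11 /=.
  by apply/eqP/idP => [<-|Ws]; [rewrite setD11 | rewrite setU1K].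
by move=> s; rewrite negbK => Ws; rewrite setD1K.
Qed.

Lemma l1_ge0 (T : finType) (mu : T -> R) : 0 <= l1 mu.
Proof. exact: sumr_ge0. Qed.

Lemma sum_push (Y Z : finType) (f : Y -> Z) (mu : Y -> R) (F : Z -> R) :
  \sum_y F (f y) * mu y = \sum_z F z * push f mu z.
Proof.
rewrite (partition_big f xpredT) //; apply: eq_bigr => z _.
by rewrite mulr_sumr; apply: eq_big => [y|y /eqP <-].
Qed.

Lemma push_sum (Y Z : finType) (f : Y -> Z) (mu : Y -> R) :
  \sum_z push f mu z = \sum_y mu y.
Proof. by rewrite [RHS](partition_big f xpredT). Qed.

Lemma pushB (Y Z : finType) (f : Y -> Z) (mu nu : Y -> R) z :
  push f (fun y => mu y - nu y) z = push f mu z - push f nu z.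
Proof. exact: sumrB. Qed.

Lemma pushE (Y Z : finType) (f : Y -> Z) (mu : Y -> R) z :
  push f mu z = \sum_y (f y == z)%:R * mu y.
Proof.
by rewrite /push big_mkcond; apply: eq_bigr => y _; case: eqP; rewrite ?mul1r ?mul0r.
Qed.

Lemma push_comp (Y Z Z' : finType) (g : Y -> Z') (r : Z' -> Z) (mu : Y -> R) z :
  push (r \o g) mu z = push r (push g mu) z.
Proof. by rewrite !pushE (sum_push g mu (fun z' => (r z' == z)%:R)). Qed.

Lemma l1_push_le (Y Z : finType) (f : Y -> Z) (mu : Y -> R) :
  l1 (push f mu) <= l1 mu.
Proof.
rewrite /l1 [in X in _ <= X](partition_big f xpredT) //.
by apply: ler_sum => z _; apply: ler_norm_sum.
Qed.

End SignedMeasures.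

Section TotalVariation.
Variables (R : realFieldType) (T : finType).
Implicit Types (P Q f : T -> R) (E : {set T}).

Lemma tv_ub P Q E : `|\sum_(t in E) P t - \sum_(t in E) Q t| <= tv P Q.
Proof. exact: (le_bigmax _ (fun E => `|_ - _|) E). Qed.

Lemma tv_le P Q c : 0 <= c ->
  (forall E, `|\sum_(t in E) P t - \sum_(t in E) Q t| <= c) -> tv P Q <= c.
Proof. by move=> c0 PQc; apply: bigmax_le => // E _; apply: PQc. Qed.

Lemma sum_setC f E : \sum_t f t = \sum_(t in E) f t + \sum_(t in ~: E) f t.
Proof.
by rewrite (bigID (mem E)) /=; congr (_ + _); apply: eq_bigl => t; rewrite in_setC.
Qed.

Lemma norm_sum_in_mass0 f E : \sum_t f t = 0 ->
  `|\sum_(t in E) f t| *+ 2 = `|\sum_(t in E) f t| + `|\sum_(t in ~: E) f t|.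
Proof.
rewrite (sum_setC f E) => /eqP; rewrite addr_eq0 => /eqP EC.
by rewrite mulr2n {2}EC normrN.
Qed.

Lemma norm_sum_in_le_l1 f E : \sum_t f t = 0 -> `|\sum_(t in E) f t| *+ 2 <= l1 f.
Proof.
move=> f0; rewrite norm_sum_in_mass0 // /l1 (sum_setC _ E).
by apply: lerD; apply: ler_norm_sum.
Qed.

Lemma norm_sum_nonneg_part f : \sum_t f t = 0 ->
  `|\sum_(t in [set t | 0 <= f t]) f t| *+ 2 = l1 f.
Proof.
move=> f0; rewrite norm_sum_in_mass0 // /l1 (sum_setC _ [set t | 0 <= f t]).
rewrite ger0_norm; last by apply: sumr_ge0 => t; rewrite inE.
rewrite ler0_norm; last by apply: sumr_le0 => t; rewrite !inE -ltNge => /ltW.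
rewrite -sumrN; congr (_ + _); apply: eq_bigr => t; rewrite !inE.
  by move=> ft; rewrite ger0_norm.
by rewrite -ltNge => ft; rewrite ltr0_norm.
Qed.

Lemma tv_l1 P Q : \sum_t P t = \sum_t Q t ->
  tv P Q *+ 2 = l1 (fun t => P t - Q t).
Proof.
move=> PQ; have f0 : \sum_t (P t - Q t) = 0 by rewrite sumrB PQ subrr.
have sumE E : \sum_(t in E) P t - \sum_(t in E) Q t = \sum_(t in E) (P t - Q t).
  by rewrite sumrB.
apply/eqP; rewrite eq_le; apply/andP; split.
  rewrite -mulr_natr -ler_pdivlMr ?ltr0n //.
  apply: tv_le => [|E]; first by rewrite divr_ge0 ?l1_ge0 ?ler0n.
  by rewrite ler_pdivlMr ?ltr0n // mulr_natr sumE norm_sum_in_le_l1.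
by rewrite -(norm_sum_nonneg_part f0) lerMn2r -sumE tv_ub orbT.
Qed.

Lemma tv_le1 P Q :
  (forall t, 0 <= P t) -> \sum_t P t = 1 ->
  (forall t, 0 <= Q t) -> \sum_t Q t = 1 -> tv P Q <= 1.
Proof.
move=> P0 P1 Q0 Q1; suff : tv P Q *+ 2 <= 1 *+ 2 by rewrite lerMn2r.
rewrite tv_l1 ?P1 ?Q1 //.
apply: (le_trans (y := \sum_t (P t + Q t))).
  by apply: ler_sum => t _; apply: le_trans (ler_normB _ _) _; rewrite !ger0_norm.
by rewrite big_split /= P1 Q1 mulr2n.
Qed.

End TotalVariation.

Section Dobrushin.
Variables (R : realFieldType) (S T : finType) (F : S -> T -> R).

Lemma dobrushin_ge0 : 0 <= dobrushin F.
Proof. exact: bigmax_ge_id. Qed.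

Lemma dobrushin_ub s s' : tv (F s) (F s') <= dobrushin F.
Proof.
apply: le_trans (le_bigmax _ _ s).
exact: (le_bigmax _ (fun s' => tv (F s) (F s')) s').
Qed.

Lemma dobrushin_le c : 0 <= c ->
  (forall s s', tv (F s) (F s') <= c) -> dobrushin F <= c.
Proof. by move=> c0 Fc; apply: bigmax_le => // s _; apply: bigmax_le => // s' _. Qed.

Lemma dobrushin_le1 :
  (forall s t, 0 <= F s t) -> (forall s, \sum_t F s t = 1) -> dobrushin F <= 1.
Proof. by move=> F0 F1; apply: dobrushin_le => // s s'; apply: tv_le1. Qed.

End Dobrushin.

Section KernelContraction.
Variables (R : realFieldType) (Z B : finType) (k : Z -> B -> R).

Definition kpush (nu : Z -> R) (b : B) : R := \sum_z nu z * k z b.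

Lemma kpushB (nu nu' : Z -> R) b :
  kpush (fun z => nu z - nu' z) b = kpush nu b - kpush nu' b.
Proof. by rewrite -sumrB; apply: eq_bigr => z _; rewrite mulrBl. Qed.

(* Each unit of the mass of N is paired with P; only the excess mass of P is
   pushed forward uncoupled. *)
Lemma kpush_mass_decomp (P N : Z -> R) b :
  (\sum_z P z) * kpush (fun z => P z - N z) b =
  \sum_z \sum_z' P z * N z' * (k z b - k z' b)
    + (\sum_z P z - \sum_z N z) * kpush P b.
Proof.
have kP : \sum_z \sum_z' P z * N z' * k z b = (\sum_z N z) * kpush P b.
  rewrite mulr_sumr; apply: eq_bigr => z _.
  by rewrite mulr_suml; apply: eq_bigr => z' _; ring.
have kN : \sum_z \sum_z' P z * N z' * k z' b = (\sum_z P z) * kpush N b.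
  rewrite exchange_big mulr_sumr; apply: eq_bigr => z' _.
  by rewrite mulr_suml; apply: eq_bigr => z _; ring.
have cross : \sum_z \sum_z' P z * N z' * (k z b - k z' b) =
    (\sum_z N z) * kpush P b - (\sum_z P z) * kpush N b.
  rewrite -kP -kN -sumrB; apply: eq_bigr => z _.
  by rewrite -sumrB; apply: eq_bigr => z' _; rewrite mulrBr.
rewrite cross kpushB; ring.
Qed.

Hypothesis k_ge0 : forall z b, 0 <= k z b.
Hypothesis k_sum1 : forall z, \sum_b k z b = 1.

Lemma sum_kpush nu : \sum_b kpush nu b = \sum_z nu z.
Proof.
rewrite exchange_big; apply: eq_bigr => z _.
by rewrite -mulr_sumr k_sum1 mulr1.
Qed.

Variable eta : R.
Hypothesis k_tv : forall z z', tv (k z) (k z') <= eta.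

Lemma l1_kpush_parts (P N : Z -> R) :
  (forall z, 0 <= P z) -> (forall z, 0 <= N z) -> \sum_z N z <= \sum_z P z ->
  l1 (kpush (fun z => P z - N z)) <=
    \sum_z P z - \sum_z N z + eta *+ 2 * \sum_z N z.
Proof.
move=> P0 N0 NP; set al := \sum_z P z; set be := \sum_z N z.
have be0 : 0 <= be by apply: sumr_ge0.
have [al_eq0|al_neq0] := eqVneq al 0.
  have P_eq0 z : P z = 0 by apply: (psumr_eq0P _ al_eq0).
  have be_eq0 : be = 0 by apply/le_anti; rewrite be0 -al_eq0 NP.
  have N_eq0 z : N z = 0 by apply: (psumr_eq0P _ be_eq0).
  rewrite al_eq0 be_eq0 subrr mulr0 addr0 /l1 big1 // => b _.
  by rewrite /kpush big1 ?normr0 // => z _; rewrite P_eq0 N_eq0 subrr mul0r.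
have al_gt0 : 0 < al by rewrite lt_def al_neq0 sumr_ge0.
have kP0 b : 0 <= kpush P b by apply: sumr_ge0 => z _; rewrite mulr_ge0.
have pointwise b : al * `|kpush (fun z => P z - N z) b| <=
    \sum_z \sum_z' P z * N z' * `|k z b - k z' b| + (al - be) * kpush P b.
  have -> : al * `|kpush (fun z => P z - N z) b| =
      `|al * kpush (fun z => P z - N z) b| by rewrite normrM ger0_norm ?ltW.
  rewrite kpush_mass_decomp -/al -/be; apply: le_trans (ler_normD _ _) _.
  rewrite [X in _ + X]ger0_norm ?mulr_ge0 ?subr_ge0 // lerD2r.
  apply: le_trans (ler_norm_sum _ _ _) _; apply: ler_sum => z _.
  apply: le_trans (ler_norm_sum _ _ _) _; apply: ler_sum => z' _.
  by rewrite normrM ger0_norm ?mulr_ge0.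
have k_l1 z z' : l1 (fun b => k z b - k z' b) <= eta *+ 2.
  by rewrite -tv_l1 ?k_sum1 // lerMn2r k_tv orbT.
rewrite -(ler_pM2l al_gt0) /l1 mulr_sumr.
apply: le_trans (ler_sum _ (fun b _ => pointwise b)) _.
rewrite big_split /= -mulr_sumr sum_kpush -/al.
apply: (le_trans (y := \sum_z \sum_z' P z * N z' * (eta *+ 2) + (al - be) * al)).
  rewrite lerD2r exchange_big; apply: ler_sum => z _; rewrite exchange_big.
  apply: ler_sum => z' _; rewrite -mulr_sumr ler_wpM2l ?mulr_ge0 //; exact: k_l1.
rewrite -/al; under eq_bigr do rewrite -mulr_suml -mulr_sumr.
by rewrite -mulr_suml -mulr_suml -/al -/be; nra.
Qed.

Lemma l1_kpush_le nu :
  l1 (kpush nu) <= (1 - eta) * `|\sum_z nu z| + eta * l1 nu.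
Proof.
pose P z := Num.max (nu z) 0; pose N z := Num.max (- nu z) 0.
have P0 z : 0 <= P z by rewrite le_max lexx orbT.
have N0 z : 0 <= N z by rewrite le_max lexx orbT.
have [nuE normE] : (forall z, nu z = P z - N z) /\ (forall z, `|nu z| = P z + N z).
  split=> z; rewrite /P /N; have [nu0|nu0] := leP 0 (nu z).
  - by rewrite max_r ?subr0 // oppr_le0.
  - by rewrite max_l ?sub0r ?opprK // oppr_ge0 ltW.
  - by rewrite max_r ?addr0 ?ger0_norm // oppr_le0.
  - by rewrite max_l ?add0r ?ltr0_norm // oppr_ge0 ltW.
have -> : l1 (kpush nu) = l1 (kpush (fun z => P z - N z)).
  by apply: eq_bigr => b _; rewrite /kpush; under eq_bigr do rewrite nuE.
have -> : l1 nu = \sum_z P z + \sum_z N z.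
  by rewrite -big_split; apply: eq_bigr => z _; apply: normE.
rewrite (eq_bigr _ (fun z _ => nuE z)) sumrB.
have [NP|PN] := leP (\sum_z N z) (\sum_z P z).
  apply: le_trans (l1_kpush_parts P0 N0 NP) _.
  by rewrite ger0_norm ?subr_ge0 //; nra.
have -> : l1 (kpush (fun z => P z - N z)) = l1 (kpush (fun z => N z - P z)).
  by apply: eq_bigr => b _; rewrite -normrN !kpushB opprB.
apply: le_trans (l1_kpush_parts N0 P0 (ltW PN)) _.
by rewrite ler0_norm ?subr_le0 //; nra.
Qed.

Lemma l1_kpush_fibres (Z' : finType) (r : Z -> Z') nu :
  \sum_z' l1 (kpush (fun z => (r z == z')%:R * nu z)) <=
    (1 - eta) * l1 (push r nu) + eta * l1 nu.
Proof.
apply: le_trans; first by apply: ler_sum => z' _; apply: l1_kpush_le.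
rewrite big_split /= -!mulr_sumr.
have -> : \sum_z' `|\sum_z (r z == z')%:R * nu z| = l1 (push r nu).
  by apply: eq_bigr => z' _; rewrite pushE.
suff -> : \sum_z' l1 (fun z => (r z == z')%:R * nu z) = l1 nu by [].
rewrite /l1 exchange_big; apply: eq_bigr => z _.
under eq_bigr do rewrite normrM ger0_norm ?ler0n //.
exact: sum_natr_eqM.
Qed.

End KernelContraction.

Section FfunSet.
Variables (I : finType) (T : I -> Type).

Definition ffun_set (f : {dffun forall i, T i}) (i : I) (b : T i) : {dffun forall i, T i} :=
  @finfun I T (dfwith (fun j => f j) b).
Arguments ffun_set : clear implicits.

Lemma ffun_set_id f i b : ffun_set f i b i = b.
Proof. by rewrite ffunE dfwith_in. Qed.

Lemma ffun_set_other f i b j : i != j -> ffun_set f i b j = f j.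
Proof. by move=> ij; rewrite ffunE dfwith_out. Qed.

End FfunSet.
Arguments ffun_set {I T} f i b.

Section Configurations.
Variables (R : realFieldType) (n : nat) (A : 'I_n -> finType).

Definition ignores (F : conf A -> R) (v : 'I_n) :=
  forall y b, F (ffun_set y v b) = F y.

Definition depends_on (F : conf A -> R) (P : pred 'I_n) :=
  forall y y' : conf A, (forall u, P u -> y u = y' u) -> F y = F y'.

Lemma depends_on_ignores F (P : pred 'I_n) v : depends_on F P -> ~~ P v -> ignores F v.
Proof.
move=> FP Pv y b; apply: FP => u Pu; apply: ffun_set_other.
by apply: contraNneq Pv => ->.
Qed.

Lemma depends_on_sub F (P P' : pred 'I_n) :
  {subset P <= P'} -> depends_on F P -> depends_on F P'.
Proof. by move=> PP' FP y y' yy'; apply: FP => u /PP'; apply: yy'. Qed.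

Lemma sum_ignores_indicator G v (a a' : A v) : ignores G v ->
  \sum_y G y * (y v == a)%:R = \sum_y G y * (y v == a')%:R.
Proof.
move=> Gv; pose s (c : A v) := if c == a then a' else if c == a' then a else c.
have sa c : (s c == a') = (c == a).
  by rewrite /s; repeat case: eqP => //; congruence.
have ss c : s (s c) = c by rewrite /s; repeat case: eqP => //; congruence.
pose tau (y : conf A) : conf A := ffun_set y v (s (y v)).
have tauK : involutive tau.
  move=> y; apply/ffunP => u; have [<-|vu] := eqVneq v u.
    by rewrite !ffun_set_id ss.
  by rewrite !ffun_set_other.
rewrite [RHS](reindex_inj (inv_inj tauK)); apply: eq_bigr => y _.
by rewrite /tau Gv ffun_set_id sa.
Qed.

Lemma sum_kernel_coord F v (k : conf A -> A v -> R) (a : A v) :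
  ignores F v -> (forall b, ignores (k^~ b) v) -> (forall y, \sum_b k y b = 1) ->
  \sum_y F y * k y (y v) = \sum_y F y * (y v == a)%:R.
Proof.
move=> Fv kv k1.
transitivity (\sum_b \sum_y F y * k y b * (y v == b)%:R).
  rewrite exchange_big; apply: eq_bigr => y _.
  rewrite -(sum_natr_eqM (y v) (fun b => F y * k y b)).
  by apply: eq_bigr => b _; ring.
transitivity (\sum_b \sum_y F y * k y b * (y v == a)%:R).
  by apply: eq_bigr => b _; apply: sum_ignores_indicator => y c /=; rewrite Fv kv.
rewrite exchange_big; apply: eq_bigr => y _.
by rewrite -mulr_suml -mulr_sumr k1 mulr1.
Qed.

Definition mrestr (V : {set 'I_n}) (z : mconf A) : mconf A :=
  @finfun _ (fun u => option (A u)) (fun u => if u \in V then z u else None).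

Lemma proj_setU1 (W : 'I_n) V (y : conf A) :
  proj (W |: V) y = ffun_set (proj V y) W (Some (y W)).
Proof.
apply/ffunP => u; have [<-|Wu] := eqVneq W u.
  by rewrite ffun_set_id ffunE setU11.
by rewrite ffun_set_other // !ffunE in_setU1 eq_sym (negbTE Wu).
Qed.

Lemma proj_mrestr (V T : {set 'I_n}) (y : conf A) :
  V \subset T -> proj V y = mrestr V (proj T y).
Proof.
move=> VT; apply/ffunP => u; rewrite !ffunE.
by case: ifP => // uV; rewrite (subsetP VT u uV).
Qed.

Lemma l1_push_setU1_le_pair (mu : conf A -> R) (W : 'I_n) (V : {set 'I_n}) :
  l1 (push (proj (W |: V)) mu) <= l1 (push (fun y => (proj V y, y W)) mu).
Proof.
pose r (p : mconf A * A W) := ffun_set p.1 W (Some p.2).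
have -> : l1 (push (proj (W |: V)) mu) = l1 (push r (push (fun y => (proj V y, y W)) mu)).
  apply: eq_bigr => z _; rewrite -push_comp; congr `|_|; apply: eq_bigl => y.
  by rewrite /= proj_setU1.
exact: l1_push_le.
Qed.

End Configurations.

Section Percolation.
Variables (R : realFieldType) (n : nat) (A : 'I_n -> finType).
Variables (pa : 'I_n -> {set 'I_n}) (X : 'I_n).
Variable K : forall v : 'I_n, conf A -> A v -> R.
Hypothesis pa_lt : forall u v, u \in pa v -> (u < v)%N.
Hypothesis pa_X : pa X = set0.
Local Notation q := (keep_prob pa K).
Hypothesis q01 : forall v, v != X -> 0 <= q v <= 1.

Lemma connect_ret_sub (s t : {set 'I_n}) u v : s \subset t ->
  connect (ret_edge pa s) u v -> connect (ret_edge pa t) u v.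
Proof.
move=> st; apply: connect_sub => u' v' /and3P[u's v's u'v']; apply: connect1.
by rewrite /ret_edge (subsetP st u' u's) (subsetP st v' v's) u'v'.
Qed.

Lemma connect_ret_mem (s : {set 'I_n}) u v : u \in s ->
  connect (ret_edge pa s) u v -> v \in s.
Proof.
move=> us /connectP[p]; elim: p u us => [|w p IH] u us /=; first by move=> _ ->.
by case/andP=> /and3P[_ ws _]; apply: IH.
Qed.

Lemma path_ret_le_last (s : {set 'I_n}) u p : path (ret_edge pa s) u p -> (u <= last u p)%N.
Proof.
elim: p u => [|w p IH] u //= /andP[/and3P[_ _ uw] wp].
exact: leq_trans (ltnW (pa_lt uw)) (IH w wp).
Qed.

Lemma connect_ret_drop (s : {set 'I_n}) (W v : 'I_n) : W \notin s -> X \in s ->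
  (v < W)%N -> connect (ret_edge pa (W |: s)) X v -> connect (ret_edge pa s) X v.
Proof.
move=> Ws Xs pW /connectP[p Xp vE]; subst v; apply/connectP; exists p => //.
elim: p X Xs Xp pW => [|w p IH] u us //= /andP[/and3P[_ ws uw] wp] pW.
have wW : (w < W)%N := leq_ltn_trans (path_ret_le_last wp) pW.
have {}ws : w \in s.
  by move: ws; rewrite in_setU1 => /predU1P[wW'|//]; rewrite wW' ltnn in wW.
by rewrite /ret_edge us ws uw /= IH.
Qed.

Lemma connect_ret_source (v : 'I_n) : connect (ret_edge pa [set X]) X v -> v = X.
Proof.
case/connectP=> -[|w p] //= /andP[/and3P[_ + Xw] _].
by rewrite in_set1 => /eqP wX; move: Xw; rewrite wX pa_X in_set0.
Qed.

Definition perc_weight (s : {set 'I_n}) : R :=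
  \prod_(v | v != X) (if v \in s then q v else 1 - q v).

Definition perc_weight_but (W : 'I_n) (s : {set 'I_n}) : R :=
  \prod_(v | (v != X) && (v != W)) (if v \in s then q v else 1 - q v).

Definition reaches (V s : {set 'I_n}) : bool :=
  (X \in s) && [exists v in V, connect (ret_edge pa s) X v].

Lemma percE (V : {set 'I_n}) : perc pa X K V = \sum_s (reaches V s)%:R * perc_weight s.
Proof.
rewrite /perc big_mkcond; apply: eq_bigr => s _.
by rewrite /reaches; case: ifP; rewrite ?mul1r ?mul0r.
Qed.

Lemma perc_weight_ge0 (s : {set 'I_n}) : 0 <= perc_weight s.
Proof.
apply: prodr_ge0 => v vX; have /andP[q0 q1] := q01 vX.
by case: ifP; rewrite ?subr_ge0.
Qed.

Lemma perc_weight_but_ge0 (W : 'I_n) (s : {set 'I_n}) : 0 <= perc_weight_but W s.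
Proof.
apply: prodr_ge0 => v /andP[vX _]; have /andP[q0 q1] := q01 vX.
by case: ifP; rewrite ?subr_ge0.
Qed.

Lemma perc_weight_setU1 (W : 'I_n) (s : {set 'I_n}) : W != X ->
  perc_weight (W |: s) = q W * perc_weight_but W s.
Proof.
move=> WX; rewrite /perc_weight (bigD1 W) //= setU11; congr (_ * _).
by apply: eq_bigr => v /andP[_ vW]; rewrite in_setU1 (negbTE vW).
Qed.

Lemma perc_weight_notin (W : 'I_n) (s : {set 'I_n}) : W != X -> W \notin s ->
  perc_weight s = (1 - q W) * perc_weight_but W s.
Proof. by move=> WX Ws; rewrite /perc_weight (bigD1 W) //= (negbTE Ws). Qed.

Lemma perc_condition (W : 'I_n) (V : {set 'I_n}) : W != X -> perc pa X K V =
  \sum_(s : {set 'I_n} | W \notin s) perc_weight_but W s *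
     ((1 - q W) * (reaches V s)%:R + q W * (reaches V (W |: s))%:R).
Proof.
move=> WX; rewrite percE (sum_set_split W); apply: eq_bigr => s Ws.
by rewrite (perc_weight_notin WX Ws) (perc_weight_setU1 _ WX); ring.
Qed.

Lemma mix_indicators_le (k : R) (e1 e2 e3 e4 f1 f2 : bool) : 0 <= k <= 1 ->
  (e1 -> f1) -> (e2 -> f1) -> (e3 -> f2) -> (e4 -> f2) ->
  (1 - k) * ((1 - k) * e1%:R + k * e2%:R) + k * ((1 - k) * e3%:R + k * e4%:R)
    <= (1 - k) * f1%:R + k * f2%:R.
Proof.
by case/andP=> k0 k1; case: f1; case: f2; case: e1; case: e2; case: e3; case: e4 => //= *; nra.
Qed.

Lemma reaches_setD1 (W : 'I_n) (V s : {set 'I_n}) : reaches (V :\ W) s -> reaches V s.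
Proof.
case/andP=> Xs /existsP[v /andP[/setD1P[_ vV] Xv]].
by rewrite /reaches Xs; apply/existsP; exists v; rewrite vV.
Qed.

Lemma perc_split_le (W : 'I_n) (V : {set 'I_n}) : W != X -> W \in V ->
  (forall v, v \in V :\ W -> (v < W)%N) ->
  (1 - q W) * perc pa X K (V :\ W) + q W * perc pa X K ((V :\ W) :|: pa W)
    <= perc pa X K V.
Proof.
move=> WX WV VW; rewrite !(perc_condition _ WX) !mulr_sumr -big_split /=.
apply: ler_sum => s Ws.
have factor (a b c d e : R) : a * (b * c) + d * (b * e) = b * (a * c + d * e) by ring.
rewrite factor ler_wpM2l ?perc_weight_but_ge0 //; apply: mix_indicators_le; first exact: q01.
- exact: reaches_setD1.
- case/andP=> XWs /existsP[v /andP[vVW Xv]].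
  have Xs : X \in s by move: XWs; rewrite in_setU1 eq_sym (negbTE WX).
  apply: (@reaches_setD1 W); rewrite /reaches Xs; apply/existsP; exists v.
  by rewrite vVW (connect_ret_drop Ws Xs (VW v vVW) Xv).
- case/andP=> Xs /existsP[v /andP[/setUP[vVW|vpa] Xv]].
    apply: (@reaches_setD1 W); rewrite /reaches setU1r //; apply/existsP; exists v.
    by rewrite vVW (connect_ret_sub (subsetUr [set W] s) Xv).
  rewrite /reaches setU1r //; apply/existsP; exists W; rewrite WV /=.
  apply: connect_trans (connect_ret_sub (subsetUr [set W] s) Xv) (connect1 _).
  by rewrite /ret_edge setU11 vpa setU1r ?andbT // (connect_ret_mem Xs Xv).
- case/andP=> Xs /existsP[v /andP[/setUP[vVW|vpa] Xv]].
    apply: (@reaches_setD1 W); rewrite /reaches Xs; apply/existsP; exists v.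
    by rewrite vVW.
  rewrite /reaches Xs; apply/existsP; exists W; rewrite WV /=.
  have vs := connect_ret_mem Xs Xv.
  by apply: connect_trans Xv (connect1 _); rewrite /ret_edge setU11 vpa vs.
Qed.

Lemma perc_weight_sum1 : \sum_(s : {set 'I_n}) (X \in s)%:R * perc_weight s = 1.
Proof.
pose F (v : 'I_n) (b : bool) : R := if v == X then b%:R else if b then q v else 1 - q v.
have prodF1 : \prod_v \sum_b F v b = 1.
  by apply: big1 => v _; rewrite big_bool /F; case: (v == X) => /=; ring.
rewrite bigA_distr_bigA in prodF1; apply: etrans prodF1.
rewrite (reindex (fun f : {ffun 'I_n -> bool} => [set v | f v])); last first.
  apply: onW_bij; exists (fun s : {set 'I_n} => [ffun v => v \in s]).
    by move=> f; apply/ffunP => v; rewrite ffunE inE.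
  by move=> s; apply/setP => v; rewrite inE ffunE.
apply: eq_bigr => f _; rewrite [RHS](bigD1 X) //= /F eqxx inE.
by congr (_ * _); apply: eq_bigr => v vX; rewrite (negbTE vX) inE.
Qed.

Lemma perc_ge0 (V : {set 'I_n}) : 0 <= perc pa X K V.
Proof. by rewrite percE sumr_ge0 // => s _; rewrite mulr_ge0 ?ler0n ?perc_weight_ge0. Qed.

Lemma perc_source (V : {set 'I_n}) : X \in V -> perc pa X K V = 1.
Proof.
move=> XV; rewrite percE -[RHS]perc_weight_sum1; apply: eq_bigr => s _.
rewrite /reaches; case: (X \in s) => //=.
suff -> : [exists v in V, connect (ret_edge pa s) X v] by [].
by apply/existsP; exists X; rewrite XV connect0.
Qed.

Lemma perc_lt1 (V : {set 'I_n}) : X \notin V -> (forall v, v != X -> q v < 1) ->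
  perc pa X K V < 1.
Proof.
move=> XV q1; rewrite -[1]perc_weight_sum1 percE -subr_gt0 -sumrB.
rewrite (bigD1 [set X]) //= -mulrBl set11.
have -> : reaches V [set X] = false.
  rewrite /reaches set11; apply/negbTE/existsP => -[v /andP[vV Xv]].
  by move: vV; rewrite (connect_ret_source Xv) (negbTE XV).
rewrite subr0 mul1r ltr_pwDl //.
  by apply: prodr_gt0 => v vX; rewrite in_set1 (negbTE vX) subr_gt0 q1.
apply: sumr_ge0 => s _; rewrite -mulrBl mulr_ge0 ?perc_weight_ge0 // subr_ge0 ler_nat.
by rewrite /reaches; case: (X \in s); rewrite ?leq_b1.
Qed.

End Percolation.

Section Network.
Variables (R : realFieldType) (n : nat) (A : 'I_n -> finType).
Variables (pa : 'I_n -> {set 'I_n}) (X : 'I_n).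
Variable K : forall v : 'I_n, conf A -> A v -> R.
Arguments K : clear implicits.
Hypothesis A_gt0 : forall v, (0 < #|A v|)%N.
Hypothesis pa_lt : forall u v, u \in pa v -> (u < v)%N.
Hypothesis K_ge0 : forall v, v != X -> forall y a, 0 <= K v y a.
Hypothesis K_sum1 : forall v, v != X -> forall y, \sum_(a : A v) K v y a = 1.
Hypothesis K_pa : forall v, v != X -> forall y y' : conf A,
  (forall u, u \in pa v -> y u = y' u) -> K v y = K v y'.

Definition conf0 : conf A :=
  @finfun _ (fun v => A v) (fun v => xchoose (elimT card_gt0P (A_gt0 v))).

(* The joint weight with the nodes from m on frozen at [conf0] instead of drawn
   from their kernels; summing out the nodes from the last one down to m is how
   one conditions on the nodes preceding m. *)
Definition trunc_weight (m : nat) (y : conf A) : R :=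
  \prod_(v | v != X) (if (m <= v)%N then (y v == conf0 v)%:R else K v y (y v)).

Definition trunc_weight_but (v : 'I_n) (y : conf A) : R :=
  \prod_(u | (u != X) && (u != v))
     (if (v < u)%N then (y u == conf0 u)%:R else K u y (y u)).

Lemma trunc_weightS v y : v != X ->
  trunc_weight v.+1 y = K v y (y v) * trunc_weight_but v y.
Proof. by move=> vX; rewrite /trunc_weight (bigD1 v) //= ltnn. Qed.

Lemma trunc_weight_frozen v y : v != X ->
  trunc_weight v y = (y v == conf0 v)%:R * trunc_weight_but v y.
Proof.
move=> vX; rewrite /trunc_weight (bigD1 v) //= leqnn; congr (_ * _).
by apply: eq_bigr => u /andP[_ uv]; rewrite leq_eqVlt eq_sym (inj_eq val_inj) (negbTE uv).
Qed.

Lemma trunc_weight_source y : trunc_weight X.+1 y = trunc_weight X y.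
Proof.
apply: eq_bigr => u uX.
by rewrite [in RHS]leq_eqVlt (inj_eq val_inj) [X == u]eq_sym (negbTE uX).
Qed.

Lemma K_ignores v b (u : 'I_n) : v != X -> (v <= u)%N -> ignores (K v ^~ b) u.
Proof.
move=> vX vu y c /=; rewrite (@K_pa v vX (ffun_set y u c) y) // => t tv.
apply: ffun_set_other; apply: contraTneq (pa_lt tv) => <-.
by rewrite -leqNgt.
Qed.

Lemma trunc_weight_but_ignores v : ignores (trunc_weight_but v) v.
Proof.
move=> y b; apply: eq_bigr => u /andP[uX uv].
rewrite ffun_set_other 1?eq_sym //; case: ltnP => // uv'.
exact: K_ignores.
Qed.

Lemma sum_joint_truncate (x : A X) k m F : (m + k = n)%N ->
  depends_on F (fun u : 'I_n => (u < m)%N) ->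
  \sum_y F y * joint K x y = \sum_y F y * (y X == x)%:R * trunc_weight m y.
Proof.
elim: k m F => [|k IH] m F mk Fm.
  rewrite addn0 in mk; subst m; apply: eq_bigr => y _.
  rewrite /joint mulrA; congr (_ * _); apply: eq_bigr => v _.
  by rewrite leqNgt ltn_ord.
have mn : (m < n)%N by rewrite -mk addnS ltnS leq_addr.
rewrite (IH m.+1); first last.
- by apply: depends_on_sub Fm => u /= /ltnW.
- by rewrite addSnnS.
pose v := Ordinal mn.
have [vX|vX] := eqVneq v X.
  by apply: eq_bigr => y _; rewrite -[m]/(val v) vX trunc_weight_source.
transitivity (\sum_y (F y * (y X == x)%:R * trunc_weight_but v y) * K v y (y v)).
  by apply: eq_bigr => y _; rewrite (trunc_weightS _ vX); ring.
rewrite (sum_kernel_coord (conf0 v)).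
- by apply: eq_bigr => y _; rewrite (trunc_weight_frozen _ vX); ring.
- move=> y b /=; rewrite trunc_weight_but_ignores ffun_set_other //.
  by rewrite (depends_on_ignores Fm) //= ltnn.
- by move=> b; apply: K_ignores.
- exact: K_sum1.
Qed.

Lemma joint_sum1 (x : A X) : \sum_y joint K x y = 1.
Proof.
have := sum_joint_truncate x (F := fun=> 1) (add0n n) (fun _ _ _ => erefl).
under eq_bigr do rewrite mul1r; move=> ->.
pose e := ffun_set conf0 X x.
have eE (y : conf A) : 1 * (y X == x)%:R * trunc_weight 0 y = (e == y)%:R.
  rewrite mul1r [e == y]eq_sym; have [->|ne] := eqVneq y e.
    rewrite ffun_set_id eqxx mul1r; apply: big1 => v vX.
    by rewrite ffun_set_other 1?eq_sym // eqxx.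
  have /existsP[v yv] : [exists v, y v != e v].
    rewrite -negb_forall; apply: contra ne => /forallP ye.
    by apply/eqP/ffunP => v; apply/eqP.
  have [vX|vX] := eqVneq v X.
    by move: yv; rewrite vX ffun_set_id => /negbTE ->; rewrite mul0r.
  rewrite /trunc_weight (bigD1 v) //=.
  by move: yv; rewrite ffun_set_other 1?eq_sym // => /negbTE ->; rewrite mul0r mulr0.
under eq_bigr do rewrite eE -[_%:R]mulr1.
exact: sum_natr_eqM.
Qed.

Lemma sum_joint_kernel (x : A X) W (h : conf A -> R) (a : A W) : W != X ->
  depends_on h (fun u : 'I_n => (u < W)%N) ->
  \sum_y h y * (y W == a)%:R * joint K x y = \sum_y h y * K W y a * joint K x y.
Proof.
move=> WX hW.
rewrite (sum_joint_truncate x (k := n - W.+1) (m := W.+1)); first last.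
- move=> y y' yy'; rewrite (yy' W) // (hW y y') // => u /= /ltnW; exact: yy'.
- by rewrite subnKC.
rewrite (sum_joint_truncate x (k := n - W) (m := W)); first last.
- move=> y y' yy'; rewrite (hW y y') // (@K_pa W WX y y') // => u /pa_lt; exact: yy'.
- by rewrite subnKC // ltnW.
transitivity (\sum_y (h y * K W y a * (y X == x)%:R * trunc_weight_but W y) * (y W == a)%:R).
  apply: eq_bigr => y _; rewrite trunc_weightS //.
  by have [<-|] := eqVneq (y W) a; rewrite ?mulr1 ?mulr0 ?mul0r //; ring.
rewrite (sum_ignores_indicator _ (conf0 W)).
  by apply: eq_bigr => y _; rewrite trunc_weight_frozen //; ring.
move=> y b; rewrite trunc_weight_but_ignores ffun_set_other //.
by rewrite (depends_on_ignores hW) ?ltnn // (K_ignores _ WX (leqnn _)).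
Qed.

Lemma joint_ge0 (x : A X) y : 0 <= joint K x y.
Proof. by rewrite mulr_ge0 ?ler0n // prodr_ge0 // => v vX; apply: K_ge0. Qed.

Lemma marg_sum1 (S : {set 'I_n}) (x : A X) : \sum_z marg K S x z = 1.
Proof. by have := push_sum (proj S) (joint K x); rewrite joint_sum1. Qed.

Definition joint_diff (x x' : A X) (y : conf A) : R := joint K x y - joint K x' y.

Lemma tv_marg (S : {set 'I_n}) (x x' : A X) :
  tv (marg K S x) (marg K S x') *+ 2 = l1 (push (proj S) (joint_diff x x')).
Proof. by rewrite tv_l1 ?marg_sum1 //; apply: eq_bigr => z _; rewrite pushB. Qed.

Definition mfill (z : mconf A) : conf A :=
  @finfun _ (fun u => A u) (fun u => odflt (conf0 u) (z u)).

Lemma K_mfill (W : 'I_n) (T : {set 'I_n}) (y : conf A) : W != X -> pa W \subset T ->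
  K W y = K W (mfill (proj T y)).
Proof.
move=> WX paT; apply: K_pa => // u uW.
by rewrite !ffunE (subsetP paT u uW).
Qed.

Lemma push_coord_kpush (x x' : A X) (W : 'I_n) (V : {set 'I_n}) z1 a :
  W != X -> (forall v, v \in V -> (v < W)%N) ->
  push (fun y => (proj V y, y W)) (joint_diff x x') (z1, a) =
  kpush (fun z => K W (mfill z))
    (fun z2 => (mrestr V z2 == z1)%:R * push (proj (V :|: pa W)) (joint_diff x x') z2) a.
Proof.
move=> WX VW; set T := V :|: pa W.
have Vdep : depends_on (fun y => (proj V y == z1)%:R : R) (fun u : 'I_n => (u < W)%N).
  move=> y y' yy'; suff -> : proj V y = proj V y' by [].
  apply/ffunP => u; rewrite !ffunE.
  by case: ifP => // uV; rewrite yy' ?VW.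
have diffE (c : conf A -> R) : \sum_y c y * joint_diff x x' y =
    \sum_y c y * joint K x y - \sum_y c y * joint K x' y.
  by rewrite -sumrB; apply: eq_bigr => y _; rewrite mulrBr.
rewrite pushE; under eq_bigr do rewrite xpair_eqE -mulnb natrM.
rewrite diffE !sum_joint_kernel // -diffE.
rewrite (eq_bigr (fun y => (mrestr V (proj T y) == z1)%:R * K W (mfill (proj T y)) a
                           * joint_diff x x' y)); last first.
  by move=> y _; rewrite -proj_mrestr ?subsetUl // -K_mfill ?subsetUr.
rewrite (sum_push (proj T) _ (fun z2 => (mrestr V z2 == z1)%:R * K W (mfill z2) a)).
by apply: eq_bigr => z2 _; rewrite mulrAC.
Qed.

Lemma eta_node_le1 (W : 'I_n) : W != X -> eta_node K W <= 1.
Proof. by move=> WX; apply: dobrushin_le1 => [y a|y]; [apply: K_ge0 | apply: K_sum1]. Qed.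

Lemma eta_induced_le1 (V : {set 'I_n}) : eta_induced X K V <= 1.
Proof.
apply: dobrushin_le1 => [x z|x]; last exact: marg_sum1.
by apply: sumr_ge0 => y _; apply: joint_ge0.
Qed.

Lemma l1_push_setU1_le (x x' : A X) (W : 'I_n) (V : {set 'I_n}) :
  W != X -> (forall v, v \in V -> (v < W)%N) ->
  l1 (push (proj (W |: V)) (joint_diff x x')) <=
    (1 - eta_node K W) * l1 (push (proj V) (joint_diff x x'))
    + eta_node K W * l1 (push (proj (V :|: pa W)) (joint_diff x x')).
Proof.
move=> WX VW; set T := V :|: pa W; set mu := joint_diff x x'.
apply: le_trans (l1_push_setU1_le_pair mu W V) _.
have -> : l1 (push (fun y => (proj V y, y W)) mu) =
    \sum_z1 l1 (fun a => push (fun y => (proj V y, y W)) mu (z1, a)).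
  by rewrite /l1 pair_big; apply: eq_bigr => -[].
have -> : l1 (push (proj V) mu) = l1 (push (mrestr V) (push (proj T) mu)).
  apply: eq_bigr => z _; rewrite -push_comp; congr `|_|; apply: eq_bigl => y.
  by rewrite /= -proj_mrestr ?subsetUl.
under eq_bigr do rewrite /l1; under eq_bigr do under eq_bigr do rewrite push_coord_kpush //.
apply: l1_kpush_fibres => [z a | z | z z'].
- exact: K_ge0.
- exact: K_sum1.
- exact: dobrushin_ub.
Qed.

Lemma eta_induced_setU1_le (W : 'I_n) (V : {set 'I_n}) :
  W != X -> (forall v, v \in V -> (v < W)%N) ->
  eta_induced X K (W |: V) <=
    (1 - eta_node K W) * eta_induced X K V + eta_node K W * eta_induced X K (V :|: pa W).
Proof.
move=> WX VW; have eta0 : 0 <= eta_node K W := dobrushin_ge0 _.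
have eta1 : 0 <= 1 - eta_node K W by rewrite subr_ge0 eta_node_le1.
apply: dobrushin_le => [|x x']; first by rewrite addr_ge0 ?mulr_ge0 ?dobrushin_ge0.
have := l1_push_setU1_le x x' WX VW.
rewrite -!tv_marg !mulrnAr -mulrnDl lerMn2r /= => /le_trans; apply.
by rewrite lerD ?ler_wpM2l // (dobrushin_ub (fun x => marg K _ x)).
Qed.

Lemma keep_prob01 v : v != X -> 0 <= keep_prob pa K v <= 1.
Proof.
move=> vX; rewrite /keep_prob; case: ifP => _; first by rewrite lexx ler01.
by rewrite dobrushin_ge0 eta_node_le1.
Qed.

Lemma eta_induced_set0 : eta_induced X K set0 <= 0.
Proof.
have proj0 (y : conf A) : proj set0 y = proj set0 conf0.
  by apply/ffunP => u; rewrite !ffunE in_set0.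
have margE (x : A X) z : marg K set0 x z = (proj set0 conf0 == z)%:R.
  transitivity ((proj set0 conf0 == z)%:R * \sum_y joint K x y); last first.
    by rewrite joint_sum1 mulr1.
  rewrite mulr_sumr /marg big_mkcond /=.
  by apply: eq_bigr => y _; rewrite proj0; case: eqP; rewrite ?mul1r ?mul0r.
apply: dobrushin_le => // x x'; apply: tv_le => // E.
by rewrite (eq_bigr _ (fun z _ => margE x z)) (eq_bigr _ (fun z _ => margE x' z)) subrr normr0.
Qed.

Lemma eta_induced_le_perc_below b (V : {set 'I_n}) : (forall v, v \in V -> (v < b)%N) ->
  eta_induced X K V <= perc pa X K V.
Proof.
elim: b V => [|b IH] V Vb.
  have -> : V = set0 by apply/setP => v; rewrite in_set0; apply/negbTE/negP => /Vb.
  exact: le_trans eta_induced_set0 (perc_ge0 keep_prob01 _).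
have [bn|nb] := ltnP b n; last by apply: IH => v _; apply: leq_trans (ltn_ord v) nb.
pose W := Ordinal bn.
have VW v : v \in V :\ W -> (v < W)%N.
  case/setD1P=> vW /Vb; rewrite ltnS leq_eqVlt => /orP[/eqP vW'|//].
  by move: vW; rewrite (_ : v = W) ?eqxx //; apply: val_inj.
have [WV|WV] := boolP (W \in V); last first.
  by apply: IH => v vV; apply: VW; rewrite in_setD1 vV andbT; apply: contraNneq WV => <-.
have [WX|WX] := eqVneq W X.
  by rewrite perc_source ?eta_induced_le1 // -WX.
rewrite -(setD1K WV); apply: le_trans (eta_induced_setU1_le WX VW) _.
rewrite setD1K //; apply: le_trans (perc_split_le pa_lt keep_prob01 WX WV VW).
have IHW : eta_induced X K (V :\ W) <= perc pa X K (V :\ W) by apply: IH.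
have IHpa : eta_induced X K (V :\ W :|: pa W) <= perc pa X K (V :\ W :|: pa W).
  by apply: IH => v /setUP[/VW|/pa_lt].
(* A parentless W is never retained, but then pa W is empty and the bound is the
   induction hypothesis. *)
rewrite /keep_prob; case: ifP => [/eqP ->|_].
  by rewrite setU0 -mulrDl subrK mul1r subr0 mul0r addr0 mul1r.
by rewrite lerD ?ler_wpM2l ?subr_ge0 ?dobrushin_ge0 ?eta_node_le1.
Qed.

Lemma eta_induced_le_perc (V : {set 'I_n}) : eta_induced X K V <= perc pa X K V.
Proof. by apply: (eta_induced_le_perc_below (b := n)) => v _; apply: ltn_ord. Qed.

End Network.

Theorem theorem6 (R : realFieldType) (n : nat) (A : 'I_n -> finType)
  (pa : 'I_n -> {set 'I_n}) (X : 'I_n)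
  (K : forall v : 'I_n, conf A -> A v -> R)
  (hA : forall v, (0 < #|A v|)%N)
  (htop : forall u v, u \in pa v -> (u < v)%N)
  (hX : pa X = set0)
  (hK0 : forall v, v != X -> forall y a, 0 <= K v y a)
  (hK1 : forall v, v != X -> forall y, \sum_(a : A v) K v y a = 1)
  (hKpa : forall v, v != X -> forall y y' : conf A,
            (forall u, u \in pa v -> y u = y' u) -> K v y = K v y') :
  (forall (W : 'I_n) (V : {set 'I_n}),
      W \notin V -> W != X -> (forall v, v \in V -> (v < W)%N) ->
      eta_induced X K (W |: V) <=
        (1 - eta_node K W) * eta_induced X K V
        + eta_node K W * eta_induced X K (V :|: pa W))
  /\ (forall V : {set 'I_n}, eta_induced X K V <= perc pa X K V)
  /\ ((forall v, v != X -> eta_node K v < 1) ->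
      forall V : {set 'I_n}, X \notin V -> eta_induced X K V < 1).
Proof.
have perc_bound V := eta_induced_le_perc hA htop hK0 hK1 hKpa V.
split; first by move=> W V _ WX VW; apply: eta_induced_setU1_le.
split=> // eta_lt1 V XV; apply: le_lt_trans (perc_bound V) (perc_lt1 hX _ XV _).
  by apply: keep_prob01.
by move=> v vX; rewrite /keep_prob; case: ifP => _; [exact: ltr01 | exact: eta_lt1].
Qed.
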